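(* Let $n,k,t$ be integers with $1\le t<k\le n$, and let $m\ge 1$. Consider the $(n,k,t)$ Staircase-PIR scheme described in the context, used by a user who wants file $f_i$, $i\in\{1,\dots,m\}$. Then: (1) Privacy: for every set $T\subseteq\{1,\dots,n\}$ with $|T|=t$, the joint distribution of the queries $(\mathbf{q}_l)_{l\in T}$ does not depend on $i$; equivalently, if the index $i$ is a random variable $\texttt{I}$ independent of the random vectors, then $H(\texttt{I}\mid \texttt{Q}_T)=H(\texttt{I})$. (2) Universal robustness and optimality: for every $\mu$ with $k\le\mu\le n$ and every set $L\subseteq\{1,\dots,n\}$ with $|L|=\mu$, the user can compute all $\alpha'$ parts of $f_i$ from the responses of the servers in $L$ to their first $\alpha'/(\mu-t)$ sub-queries only. Hence, when waiting for any $\mu$ servers, the user downloads $\mu\alpha'/(\mu-t)$ symbols to retrieve the $\alpha'$ symbols of the file, i.e. the scheme achieves rate $$\frac{\alpha'}{\mu\,\alpha'/(\mu-t)}=1-\frac{t}{\mu}=C(t,\mu)$$ simultaneously for all $\mu\in\{k,\dots,n\}$.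
   Context: Setting: $m$ files are replicated on $n$ servers; a user wants file $f_i$ while any $t$ colluding servers must learn nothing about $i$. All arithmetic is over a finite field $GF(q)$ with $q>n$. Parameters: for $j=1,\dots,n-k+1$ let $\mu_j=n-j+1$ and $\alpha_j=\mu_j-t$ (so $\alpha_{j-1}-\alpha_j=1$; set $\alpha_0=1$). Let $\alpha=\mathrm{lcm}(\alpha_1,\dots,\alpha_{n-k})$ (with $\alpha=1$ if $n=k$) and $\alpha'=(k-t)\alpha$. Each file is split into $\alpha'$ symbols and the data is the vector $\mathbf{x}=[x_1,\dots,x_{\alpha' m}]^T\in GF(q)^{\alpha' m}$ with $f_i=[x_i,x_{m+i},\dots,x_{(\alpha'-1)m+i}]$. Let $\mathbf{e}_p$ be the $p$-th standard basis vector of $GF(q)^{\alpha' m}$ and $\mathbf{e}'_j=\mathbf{e}_{(j-1)m+i}$, so $f_i=[\mathbf{e}_1'^T\mathbf{x},\dots,\mathbf{e}_{\alpha'}'^T\mathbf{x}]$. Construction of the queries: the user draws i.i.d. random vectors uniformly from $GF(q)^{\alpha' m}$, independent of $i$. All matrices below have entries that are vectors in $GF(q)^{\alpha' m}$. Let $\mathcal{E}$ be the $\alpha_1\times(\alpha'/\alpha_1)$ matrix containing $\mathbf{e}'_1,\dots,\mathbf{e}'_{\alpha'}$ (filled column by column). For $j=1,\dots,n-k+1$ let $\mathcal{R}_j$ be a $t\times \alpha'/(\alpha_{j-1}\alpha_j)$ matrix of fresh random vectors (distinct entries are distinct independent random vectors). Let $\mathcal{M}_1=\begin{bmatrix}\mathcal{E}\\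 \mathcal{R}_1\end{bmatrix}$ (an $n\times \alpha'/\alpha_1$ matrix). For $l=1,\dots,n-k$, let $\mathcal{D}_l$ be the $\alpha_{l+1}\times \alpha'/(\alpha_l\alpha_{l+1})$ matrix obtained by taking the $(n-l+1)$-th row of the concatenation $[\mathcal{M}_1\ \mathcal{M}_2\ \cdots\ \mathcal{M}_l]$ (which has exactly $\alpha'/\alpha_l$ entries) and writing its entries into $\mathcal{D}_l$ column by column. For $j=2,\dots,n-k+1$ let $\mathcal{M}_j=\begin{bmatrix}\mathcal{D}_{j-1}\\ \mathcal{R}_j\\ \mathbf{0}\end{bmatrix}$, where $\mathbf{0}$ is a $(j-1)\times \alpha'/(\alpha_{j-1}\alpha_j)$ block of zero vectors, so that $\mathcal{M}_j$ has $n$ rows. Let $\mathcal{M}=[\mathcal{M}_1\ \mathcal{M}_2\ \cdots\ \mathcal{M}_{n-k+1}]$, an $n\times\alpha$ matrix. Let $\mathcal{V}$ be the $n\times n$ Vandermonde matrix $\mathcal{V}_{l,c}=a_l^{c-1}$ with $a_1,\dots,a_n$ distinct nonzero elements of $GF(q)$. The query matrix is $\mathcal{Q}=\mathcal{V}\mathcal{M}$; server $l$ receives the query $\mathbf{q}_l$ = row $l$ of $\mathcal{Q}$, consisting of $\alpha$ sub-queries $\mathbf{q}_{l,1},\dots,\mathbf{q}_{l,\alpha}\in GF(q)^{\alpha' m}$, and answers sub-query $c$ with the symbol $\mathbf{q}_{l,c}^T\mathbf{x}$. The rate of retrieval is the number of file symbols divided by the number of downloaded symbols; $C(t,\mu)=1-t/\mu$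 is the asymptotic capacity of PIR with $t$ colluding servers and $\mu$ responding servers. *)

From HB Require Import structures.
From mathcomp Require Import all_boot all_order all_algebra.
Set Implicit Arguments. Unset Strict Implicit. Unset Printing Implicit Defensive.
Import Order.TTheory GRing.Theory Num.Theory.

(* All indices below are 0-based naturals unless stated otherwise. *)

(* alpha_j = mu_j - t = n - j + 1 - t  for j >= 1, and alpha_0 = 1. *)
Definition al (n t j : nat) : nat := if j == 0%N then 1%N else (n - j + 1 - t)%N.

Definition alpha (n k t : nat) : nat := \big[lcmn/1%N]_(1 <= j < (n - k).+1) al n t j.

(* alpha' = (k - t) alpha : number of symbols per file *)
Definition alpha' (n k t : nat) : nat := ((k - t) * alpha n k t)%N.

(* number of columns of M_j  (j >= 1) : alpha' / (alpha_{j-1} alpha_j) *)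
Definition width (n k t j : nat) : nat := (alpha' n k t %/ (al n t j.-1 * al n t j))%N.

(* number of columns of the concatenation [M_1 ... M_l] *)
Definition ncols (n k t l : nat) : nat := (\sum_(1 <= j < l.+1) width n k t j)%N.

Local Open Scope ring_scope.

Section Staircase.
Variable F : finFieldType.
Variables n k t m : nat.
Local Notation N := (alpha' n k t * m)%N.

(* file index (0-based) *)
Variable i : nat.

(* e'_{j+1} = e_{j m + i + 1} (paper's 1-based indexing); here 0-based:
   the standard basis vector of GF(q)^{alpha' m} at position j*m + i. *)
Definition evec (j : nat) : 'rV[F]_N := \row_(p < N) (nat_of_ord p == j * m + i)%N%:R.

Definition dot (q x : 'rV[F]_N) : F := \sum_(p < N) q 0 p * x 0 p.

(* rnd s c = the random vector in row s (< t) of the random block sitting in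
   (global, 0-based) column c of M. *)
Variable rnd : nat -> nat -> 'rV[F]_N.

(* Mcat l r c = entry (row r, column c) of the concatenation [M_1 ... M_l].
   Block M_j occupies the columns ncols (j-1) <= c < ncols j. *)
Fixpoint Mcat (l : nat) : nat -> nat -> 'rV[F]_N :=
  match l with
  | 0 => fun _ _ => 0
  | l'.+1 => fun r c =>
      if (c < ncols n k t l')%N then Mcat l' r c else
      let c' := (c - ncols n k t l')%N in
      let j := l'.+1 in
      if (r < al n t j)%N then
        (* M_1: block E (filled column by column);
           M_j, j >= 2: block D_{j-1} (row n-j+2 (1-based) of [M_1..M_{j-1}],
           filled column by column) *)
        (if l' is 0 then evec (c' * al n t j + r)
         else Mcat l' (n - j + 1) (c' * al n t j + r))
      else if (r < al n t j + t)%N then rnd (r - al n t j) c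
      else 0
  end.

Definition Mmat (r c : nat) : 'rV[F]_N := Mcat (n - k).+1 r c.

(* query matrix Q = V M with V_{l,r} = a_l^r (0-based r):
   sub-query c of server l *)
Definition query (a : 'I_n -> F) (l : 'I_n) (c : nat) : 'rV[F]_N :=
  \sum_(r < n) (a l ^+ r) *: Mmat r c.

Definition answer (a : 'I_n -> F) (x : 'rV[F]_N) (l : 'I_n) (c : nat) : F :=
  dot (query a l c) x.

End Staircase.

(* The user's randomness: t * alpha i.i.d. uniform vectors, one for each
   (row s < t, global column c < alpha) of the random blocks R_j. *)
Definition rand_t (F : finFieldType) (n k t m : nat) :=
  {ffun 'I_t * 'I_(alpha n k t) -> 'rV[F]_(alpha' n k t * m)}.

Definition Rnat (F : finFieldType) (n k t m : nat) (R : rand_t F n k t m)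
  (s c : nat) : 'rV[F]_(alpha' n k t * m) :=
  match (insub s : option 'I_t), (insub c : option 'I_(alpha n k t)) with
  | Some s', Some c' => R (s', c')
  | _, _ => 0
  end.

Arguments Mcat : clear implicits.
Arguments Mmat : clear implicits.
Arguments query : clear implicits.
Arguments answer : clear implicits.

From HB Require Import structures.
From mathcomp Require Import all_boot all_order all_algebra.
From mathcomp Require Import zify ring.
Import Order.TTheory GRing.Theory Num.Theory.

(* Column c of the staircase matrix M lies in some block M_(l+1): its first
   alpha_(l+1) entries repeat entries of earlier columns (or are the basis
   vectors e'_j when l = 0), the next t are fresh random vectors and the others
   vanish. Server l receives the evaluation at a_l of the polynomial whose
   coefficients are that column.
   Privacy: once the columns before c are fixed, the queries of t servers
   determine the t random entries of column c through an invertible Vandermonde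
   system. Hence the map sending the randomness to the queries seen by T is
   injective; both consist of t * alpha vectors, so it is a bijection and every
   query value is produced by exactly one randomness, whatever the file index.
   Robustness: the first alpha'/(mu - t) columns are the blocks M_1, ...,
   M_(n-mu+1), and in each of them the rows of index >= mu are zero or reappear
   in a later column of these blocks. Decoding the columns from the last one
   backwards, each is a polynomial of degree < mu known at mu points. *)

Section LowDegreeSums.
Variables (R : idomainType) (I : finType) (a : I -> R) (S : {set I}).
Hypothesis a_inj : injective a.
Local Open Scope ring_scope.

Lemma coef_eq0_of_roots d N (w : nat -> R) : (d <= #|S|)%N -> (d <= N)%N ->
  (forall r, (d <= r)%N -> w r = 0) ->
  (forall l, l \in S -> \sum_(r < N) w r * a l ^+ r = 0) -> forall r, w r = 0.
Proof.
move=> d_le_S d_le_N w_hi w_roots.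
have sum_horner x : \sum_(r < N) w r * x ^+ r = (\poly_(r < d) w r).[x].
  rewrite horner_poly (big_ord_widen N (fun r => w r * x ^+ r) d_le_N) [RHS]big_mkcond.
  by apply: eq_bigr => r _; case: ltnP => // /w_hi->; rewrite mul0r.
have p_eq0 : \poly_(r < d) w r = 0.
  apply: (@roots_geq_poly_eq0 _ _ [seq a l | l in S]).
  - by apply/allP => x /mapP[l]; rewrite mem_enum => l_S ->; rewrite /root -sum_horner w_roots.
  - by rewrite map_inj_uniq ?enum_uniq.
  - by rewrite size_map -cardE (leq_trans (size_poly _ _)).
move=> r; case: (ltnP r d) => [r_lt | /w_hi //].
by have := coef_poly d w r; rewrite p_eq0 coef0 r_lt.
Qed.

Lemma shifted_coef_eq0_of_roots b d N (w : nat -> R) :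
  (forall l, l \in S -> a l != 0) -> (d <= #|S|)%N -> (b + d <= N)%N ->
  (forall r, ~~ (b <= r < b + d)%N -> w r = 0) ->
  (forall l, l \in S -> \sum_(r < N) w r * a l ^+ r = 0) -> forall r, w r = 0.
Proof.
move=> a_neq0 d_le_S bd_le_N w_out w_roots.
have b_le_N : (b <= N)%N by apply: leq_trans bd_le_N; apply: leq_addr.
have shift x : \sum_(r < N) w r * x ^+ r = x ^+ b * \sum_(r < N - b) w (r + b)%N * x ^+ r.
  rewrite -(big_mkord xpredT (fun r => w r * x ^+ r)) (big_cat_nat _ (n := b)) //=.
  rewrite big_nat big1 ?add0r => [|r /andP[_ r_lt]]; last first.
    by rewrite w_out ?mul0r // negb_and -ltnNge r_lt.
  rewrite -{1}[b]add0n big_addn big_mkord mulr_sumr.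
  by apply: eq_bigr => r _; rewrite exprD mulrA mulrC.
have w_shift_eq0 : forall r, w (r + b)%N = 0.
  apply: (coef_eq0_of_roots d (N - b)) => //; first by rewrite leq_subRL.
    by move=> r d_le_r; rewrite w_out // addnC ltn_add2l ltnNge d_le_r andbF.
  move=> l l_S; have /eqP := w_roots l l_S.
  by rewrite shift mulf_eq0 expf_eq0 (negbTE (a_neq0 l l_S)) andbF => /eqP.
move=> r; case: (ltnP r b) => [r_lt | /subnK <-]; last exact: w_shift_eq0.
by rewrite w_out // negb_and -ltnNge r_lt.
Qed.

End LowDegreeSums.

Lemma exists_decoder {X I : finType} {Y : eqType} {J Z : Type} (z0 : Z) {P : pred J}
    {f : X -> I -> Y} {g : X -> J -> Z} :
  (forall x x', f x =1 f x' -> forall j, P j -> g x j = g x' j) ->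
  exists dec : (I -> Y) -> J -> Z, forall x j, P j -> dec (f x) j = g x j.
Proof.
move=> f_det.
exists (fun y j => if [pick x | [forall l, y l == f x l]] is Some x then g x j else z0).
move=> x j Pj; case: pickP => [x' /forallP f_eq | /(_ x)/negbT/forallPn [l]].
  by apply: f_det => // l; apply/esym/eqP.
by rewrite eqxx.
Qed.

Section Dot.
Variables (F : finFieldType) (n k t m : nat).
Local Notation N := (alpha' n k t * m).
Local Open Scope ring_scope.

Lemma dot_suml (I : finType) (s : I -> F) (v : I -> 'rV[F]_N) x :
  dot (\sum_r s r *: v r) x = \sum_r s r * dot (v r) x.
Proof.
rewrite /dot; under eq_bigr => p _ do rewrite summxE mulr_suml.
rewrite exchange_big /=; apply: eq_bigr => r _.
by rewrite mulr_sumr; apply: eq_bigr => p _; rewrite mxE mulrA.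
Qed.

Lemma dotBr (q x y : 'rV[F]_N) : dot q (x - y) = dot q x - dot q y.
Proof. by rewrite /dot -sumrB; apply: eq_bigr => p _; rewrite !mxE mulrBr. Qed.

Lemma dot0l (x : 'rV[F]_N) : dot 0 x = 0.
Proof. by rewrite /dot big1 // => p _; rewrite mxE mul0r. Qed.

End Dot.

Lemma rate_eq (R : numFieldType) c mu t : 0 < c -> t < mu ->
  ((c * (mu - t))%:R / (mu * c)%:R = 1 - t%:R / mu%:R :> R)%R.
Proof.
move=> c_gt0 t_lt_mu; rewrite natrM natrB ?(ltnW t_lt_mu) // natrM.
by field; rewrite !pnatr_eq0 -!lt0n c_gt0 andbT (leq_ltn_trans (leq0n t) t_lt_mu).
Qed.

Section Staircase.
Variables n k t : nat.
Hypotheses (t_lt_k : t < k) (k_le_n : k <= n).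
Local Notation K := (n - k).+1.

Lemma al_gt0 j : 0 < j <= K -> 0 < al n t j.
Proof. by case: j => [|j]; rewrite /al /=; lia. Qed.

Lemma alS j : 0 < j < K -> al n t j = (al n t j.+1).+1.
Proof. by case: j => [|j]; rewrite /al /=; lia. Qed.

Lemma al_last : al n t K = k - t.
Proof. by rewrite /al /=; lia. Qed.

Lemma al_addt l : l < K -> al n t l.+1 + t = n - l.
Proof. by rewrite /al /=; lia. Qed.

Lemma coprime_al j : 0 < j <= K -> coprime (al n t j.-1) (al n t j).
Proof.
case: j => [|[|j]] // j_le; first exact: coprime1n.
by rewrite [j.+2.-1]/= alS ?coprimeSn //; lia.
Qed.

Lemma al_dvdn_alpha' j : 0 < j <= K -> al n t j %| alpha' n k t.
Proof.
move=> /andP[j_gt0]; rewrite leq_eqVlt => /orP[/eqP-> | j_lt].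
  by rewrite al_last dvdn_mulr.
apply: dvdn_mull; rewrite /alpha (bigD1_seq j) ?iota_uniq //=.
  exact: dvdn_lcml.
by rewrite mem_index_iota j_gt0.
Qed.

Lemma al2_dvdn_alpha' j : 0 < j <= K -> al n t j.-1 * al n t j %| alpha' n k t.
Proof.
move=> j_bd; rewrite Gauss_dvd ?coprime_al // (al_dvdn_alpha' j j_bd) andbT.
by case: j j_bd => [|[|j]] j_bd //; apply: al_dvdn_alpha'; lia.
Qed.

Lemma alpha_gt0 : 0 < alpha n k t.
Proof.
rewrite /alpha big_nat_cond; elim/big_ind: _ => // [p q p_gt0 q_gt0 | j].
  by rewrite lcmn_gt0 p_gt0.
by rewrite andbT => j_bd; apply: al_gt0; lia.
Qed.

Lemma ncols0 : ncols n k t 0 = 0.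
Proof. by rewrite /ncols big_geq. Qed.

Lemma ncolsS l : ncols n k t l.+1 = ncols n k t l + width n k t l.+1.
Proof. by rewrite /ncols big_nat_recr. Qed.

Lemma leq_ncols : {homo ncols n k t : l l' / l <= l'}.
Proof.
move=> l l' /subnKC <-; elim: (l' - l) => [|d IH]; first by rewrite addn0.
by rewrite addnS ncolsS (leq_trans IH) ?leq_addr.
Qed.

Lemma ncols_block c l : c < ncols n k t l ->
  exists2 j, j < l & ncols n k t j <= c < ncols n k t j.+1.
Proof.
elim: l => [|l IH]; first by rewrite ncols0.
case: (ltnP c (ncols n k t l)) => [/IH [j j_lt c_bd] _ | c_ge c_lt].
  by exists j => //; apply: ltnW.
by exists l; rewrite ?c_ge.
Qed.

Lemma ncols_mul_al j : 0 < j <= K -> ncols n k t j * al n t j = alpha' n k t.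
Proof.
elim: j => [|[|j] IH] // j_bd.
  have := al2_dvdn_alpha' 1 j_bd; rewrite [al n t _.-1]/al /= mul1n => dvd_A.
  by rewrite ncolsS ncols0 /width add0n [al n t _.-1]/al /= mul1n divnK.
have /dvdnP [q A_eq] := al2_dvdn_alpha' j.+2 j_bd.
have al1_gt0 : 0 < al n t j.+1 by apply: al_gt0; lia.
have al2_gt0 : 0 < al n t j.+2 by apply: al_gt0.
have ncols_eq : ncols n k t j.+1 = q * al n t j.+2.
  apply/eqP; rewrite -(eqn_pmul2r al1_gt0) IH; last by lia.
  by rewrite A_eq mulnA mulnAC.
rewrite ncolsS /width A_eq mulnK ?muln_gt0 ?al1_gt0 // ncols_eq [_.-1]/=.
by rewrite (alS j.+1) //; lia.
Qed.

Lemma alpha'_gt0 : 0 < alpha' n k t.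
Proof. by rewrite muln_gt0 subn_gt0 t_lt_k alpha_gt0. Qed.

Lemma ncols_last : ncols n k t K = alpha n k t.
Proof.
have := ncols_mul_al K; rewrite al_last /alpha' mulnC leqnn => /(_ isT) /eqP.
by rewrite eqn_pmul2l ?subn_gt0 // => /eqP.
Qed.

Lemma width_mul_al j : 0 < j < K -> width n k t j.+1 * al n t j.+1 = ncols n k t j.
Proof.
move=> j_bd; have al_j_gt0 : 0 < al n t j by apply: al_gt0; lia.
apply/eqP; rewrite -(eqn_pmul2r al_j_gt0) ncols_mul_al; last lia.
rewrite /width [j.+1.-1]/= -mulnA [al n t j.+1 * _]mulnC.
by rewrite divnK // (al2_dvdn_alpha' j.+1); lia.
Qed.

Lemma copy_col_lt l c r : 0 < l < K -> ncols n k t l <= c < ncols n k t l.+1 ->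
  r < al n t l.+1 -> (c - ncols n k t l) * al n t l.+1 + r < ncols n k t l.
Proof.
move=> l_bd /andP[c_ge c_lt] r_lt.
have w_lt : c - ncols n k t l < width n k t l.+1 by move: c_lt; rewrite ncolsS; lia.
rewrite -[X in _ < X]width_mul_al //.
apply: leq_trans (leq_mul w_lt (leqnn (al n t l.+1))).
by rewrite mulSn [_ + r]addnC ltn_add2r.
Qed.

Lemma ncols_add_div_lt j c : 0 < j < K -> c < ncols n k t j ->
  ncols n k t j + c %/ al n t j.+1 < ncols n k t j.+1.
Proof.
move=> j_bd c_lt; rewrite ncolsS ltn_add2l ltn_divLR ?width_mul_al //.
by apply: al_gt0; lia.
Qed.

Section Matrix.
Variables (F : finFieldType) (m i : nat).
Local Notation Mcat := (Mcat F n k t m i).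
Local Notation Mmat := (Mmat F n k t m i).
Local Notation evec := (evec F n k t m i).

Lemma McatS rnd l r c : Mcat rnd l.+1 r c =
  if c < ncols n k t l then Mcat rnd l r c
  else if r < al n t l.+1 then
    if l is 0 then evec ((c - ncols n k t l) * al n t l.+1 + r)
    else Mcat rnd l (n - l.+1 + 1) ((c - ncols n k t l) * al n t l.+1 + r)
  else if r < al n t l.+1 + t then rnd (r - al n t l.+1) c else 0%R.
Proof. by []. Qed.

Lemma Mcat_widen l l' rnd r c : l <= l' -> c < ncols n k t l ->
  Mcat rnd l' r c = Mcat rnd l r c.
Proof.
move=> /subnKC <- c_lt; elim: (l' - l) => [|d IH]; first by rewrite addn0.
by rewrite addnS McatS (leq_trans c_lt) ?leq_ncols ?leq_addr.
Qed.

Lemma Mmat_block l rnd r c : l < K -> ncols n k t l <= c < ncols n k t l.+1 ->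
  Mmat rnd r c =
  if r < al n t l.+1 then
    if l is 0 then evec (c * al n t 1 + r)
    else Mmat rnd (n - l) ((c - ncols n k t l) * al n t l.+1 + r)
  else if r < al n t l.+1 + t then rnd (r - al n t l.+1) c else 0%R.
Proof.
move=> l_lt /andP[c_ge c_lt]; rewrite /Mmat (Mcat_widen l.+1 K) // McatS.
rewrite ifN -?leqNgt //; case: ifP => // r_lt.
case: l l_lt c_ge c_lt r_lt => [|l] l_lt c_ge c_lt r_lt; first by rewrite ncols0 subn0.
have -> : n - l.+2 + 1 = n - l.+1 by lia.
by rewrite (Mcat_widen l.+1 K) ?(ltnW l_lt) // copy_col_lt ?c_ge.
Qed.

Lemma Mmat_zero l rnd r c : l < K -> ncols n k t l <= c < ncols n k t l.+1 ->
  n - l <= r -> Mmat rnd r c = 0%R.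
Proof.
move=> l_lt c_bd r_ge; have al_t := al_addt l l_lt.
by rewrite (Mmat_block l) // !ifN // -leqNgt; lia.
Qed.

Lemma Mmat_evec rnd j : j < alpha' n k t ->
  Mmat rnd (j %% al n t 1) (j %/ al n t 1) = evec j.
Proof.
move=> j_lt; have al1_gt0 : 0 < al n t 1 by apply: al_gt0.
rewrite (Mmat_block 0) ?ltn_mod ?al1_gt0 -?divn_eq //.
by rewrite ncols0 ltn_divLR // ncols_mul_al.
Qed.

Lemma Mmat_copy j rnd c : 0 < j < K -> c < ncols n k t j ->
  Mmat rnd (n - j) c = Mmat rnd (c %% al n t j.+1) (ncols n k t j + c %/ al n t j.+1).
Proof.
move=> j_bd c_lt; have al_gt0' : 0 < al n t j.+1 by apply: al_gt0; lia.
rewrite [RHS](Mmat_block j) ?leq_addr ?ncols_add_div_lt ?ltn_mod ?al_gt0' //; last lia.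
by case: j j_bd c_lt al_gt0' => [|j] // j_bd c_lt _; rewrite addKn -divn_eq.
Qed.

Lemma Mmat_causal c0 rnd rnd' : (forall s c, c < c0 -> rnd s c = rnd' s c) ->
  forall r c, c < c0 -> c < alpha n k t -> Mmat rnd r c = Mmat rnd' r c.
Proof.
move=> eq_rnd r c; elim/ltn_ind: c r => c IH r c_lt0 c_lt.
have [|l l_lt c_bd] := ncols_block c K; first by rewrite ncols_last.
rewrite (Mmat_block l _ r c) // (Mmat_block l rnd' r c) //.
case: ifP => r_lt; last by rewrite eq_rnd.
case: l l_lt c_bd r_lt => [|l] // l_lt c_bd r_lt.
have c'_lt := copy_col_lt l.+1 c r l_lt c_bd r_lt; apply: IH; lia.
Qed.

Lemma Mmat_subr l rnd rnd' r c : l < K -> ncols n k t l <= c < ncols n k t l.+1 ->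
  (forall s c', c' < c -> rnd s c' = rnd' s c') ->
  (Mmat rnd r c - Mmat rnd' r c)%R =
  if al n t l.+1 <= r < al n t l.+1 + t
  then (rnd (r - al n t l.+1)%N c - rnd' (r - al n t l.+1)%N c)%R else 0%R.
Proof.
move=> l_lt c_bd eq_rnd.
rewrite (Mmat_block l _ r c) // (Mmat_block l rnd' r c) //.
case: ltnP => r_lt /=; last by case: ifP; rewrite ?subrr.
case: l l_lt c_bd r_lt => [|l] l_lt c_bd r_lt; first exact: subrr.
have c'_lt := copy_col_lt l.+1 c r l_lt c_bd r_lt.
have c_alpha : c < alpha n k t.
  by rewrite -ncols_last; apply: leq_trans (leq_ncols _ _ l_lt); case/andP: c_bd.
by rewrite (Mmat_causal c _ _ eq_rnd) ?subrr //; lia.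
Qed.

Lemma query_entry rnd a l c p :
  query F n k t m i rnd a l c 0%R p = (\sum_(r < n) Mmat rnd r c 0 p * a l ^+ r)%R.
Proof. by rewrite /query summxE; apply: eq_bigr => r _; rewrite mxE mulrC. Qed.

Section Decoding.
Variables (a : 'I_n -> F) (mu : nat).
Hypotheses (k_le_mu : k <= mu) (mu_le_n : mu <= n).
Local Notation j0 := (n - mu).+1.
Local Notation answer := (answer F n k t m i).

Lemma al_mu : al n t j0 = mu - t.
Proof. by rewrite /al /=; lia. Qed.

Lemma ncols_mu : ncols n k t j0 * (mu - t) = alpha' n k t.
Proof. by rewrite -al_mu ncols_mul_al //; lia. Qed.

Lemma Mmat_high_row rnd r c : mu <= r -> c < ncols n k t j0 ->
  Mmat rnd r c = 0%R \/
  exists2 c', c < c' < ncols n k t j0 & exists r', Mmat rnd r c = Mmat rnd r' c'.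
Proof.
move=> mu_le_r c_lt; have [l l_lt c_bd] := ncols_block c j0 c_lt.
case: (leqP (n - l) r) => [r_ge | r_lt].
  by left; apply: (Mmat_zero l) => //; lia.
right; set j := n - r; have j_bd : 0 < j < K by lia.
have c_lt_j : c < ncols n k t j.
  by apply: leq_trans (leq_ncols l.+1 j _); [case/andP: c_bd | lia].
exists (ncols n k t j + c %/ al n t j.+1).
  rewrite (leq_trans c_lt_j (leq_addr _ _)) /=.
  by apply: leq_trans (ncols_add_div_lt j c j_bd c_lt_j) (leq_ncols _ _ _); lia.
by exists (c %% al n t j.+1); rewrite -Mmat_copy // /j subKn //; lia.
Qed.

Lemma answerE rnd z l c :
  answer rnd a z l c = (\sum_(r < n) dot (Mmat rnd r c) z * a l ^+ r)%R.
Proof. by rewrite /answer /query dot_suml; apply: eq_bigr => r _; rewrite mulrC. Qed.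

Lemma answerBr rnd x y l c :
  answer rnd a (x - y)%R l c = (answer rnd a x l c - answer rnd a y l c)%R.
Proof. exact: dotBr. Qed.

Variable L : {set 'I_n}.
Hypotheses (a_inj : injective a) (card_L : #|L| = mu).

Section ZeroResponses.
Variables (rnd : nat -> nat -> 'rV[F]_(alpha' n k t * m)) (z : 'rV[F]_(alpha' n k t * m)).
Hypothesis answers_eq0 :
  forall l c, l \in L -> c < ncols n k t j0 -> answer rnd a z l c = 0%R.

Lemma dot_Mmat_eq0 c r : c < ncols n k t j0 -> dot (Mmat rnd r c) z = 0%R.
Proof.
have [e] := ubnP (ncols n k t j0 - c); elim: e c r => // e IH c r e_bd c_lt.
apply: (coef_eq0_of_roots _ _ _ L a_inj mu n (fun r => dot (Mmat rnd r c) z)) => //.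
- by rewrite card_L.
- move=> r' mu_le_r'.
  case: (Mmat_high_row rnd r' c mu_le_r' c_lt) => [-> | [c' c'_bd [r'' ->]]].
    exact: dot0l.
  by apply: IH; lia.
- by move=> l l_L; rewrite -answerE answers_eq0.
Qed.

Lemma dot_evec_eq0 j : j < alpha' n k t -> dot (evec j) z = 0%R.
Proof.
move=> j_lt; rewrite -(Mmat_evec rnd j j_lt) dot_Mmat_eq0 //.
have al1_gt0 : 0 < al n t 1 by apply: al_gt0.
rewrite (leq_trans _ (leq_ncols 1 j0 _)) // ltn_divLR // ncols_mul_al //.
Qed.

End ZeroResponses.

Lemma staircase_decoder rnd : exists dec : ('I_n -> nat -> F) -> nat -> F,
  forall x j, j < alpha' n k t ->
  dec (fun l c => if (l \in L) && (c < alpha' n k t %/ (mu - t))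
                  then answer rnd a x l c else 0%R) j = dot (evec j) x.
Proof.
set B := alpha' n k t %/ (mu - t).
pose resp x l c := if (l \in L) && (c < B) then answer rnd a x l c else 0%R.
have resp_determines x x' : (fun lc : 'I_n * 'I_B => resp x lc.1 lc.2) =1
    (fun lc => resp x' lc.1 lc.2) ->
    forall j, j < alpha' n k t -> dot (evec j) x = dot (evec j) x'.
  move=> resp_eq j j_lt; apply/eqP; rewrite -subr_eq0 -dotBr; apply/eqP.
  apply: (dot_evec_eq0 rnd) => // l c l_L c_lt.
  have c_B : c < B by rewrite /B -ncols_mu mulnK // subn_gt0; lia.
  rewrite answerBr; apply/eqP; rewrite subr_eq0; apply/eqP.
  by have := resp_eq (l, Ordinal c_B); rewrite /resp /= l_L c_B.
have [dec dec_eq] := exists_decoder 0%R resp_determines.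
by exists (fun ans : 'I_n -> nat -> F => dec (fun lc => ans lc.1 lc.2)).
Qed.

End Decoding.

Section Privacy.
Variables (a : 'I_n -> F) (T : {set 'I_n}).
Hypotheses (a_inj : injective a) (a_neq0 : forall l, a l != 0%R) (card_T : #|T| = t).
Local Notation query := (query F n k t m i).

Lemma RnatE (R : rand_t F n k t m) (s : 'I_t) (c : 'I_(alpha n k t)) :
  Rnat R s c = R (s, c).
Proof. by rewrite /Rnat !valK. Qed.

Lemma Rnat_eq_upto c0 (R R' : rand_t F n k t m) :
  (forall s (c : 'I_(alpha n k t)), c < c0 -> R (s, c) = R' (s, c)) ->
  forall s c, c < c0 -> Rnat R s c = Rnat R' s c.
Proof.
move=> eq_R s c c_lt; rewrite /Rnat.
case: insubP => [s' _ _ | //]; case: insubP => [c' _ c_eq | //].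
by apply: eq_R; rewrite c_eq.
Qed.

Lemma query_inj (R R' : rand_t F n k t m) :
  (forall l (c : 'I_(alpha n k t)), l \in T -> query (Rnat R) a l c = query (Rnat R') a l c) ->
  R = R'.
Proof.
move=> eq_q; suff eq_upto c0 : forall s (c : 'I_(alpha n k t)), c < c0 -> R (s, c) = R' (s, c).
  by apply/ffunP => -[s c]; apply: (eq_upto c.+1).
elim: c0 => [//|c0 IH] s c; rewrite ltnS leq_eqVlt => /orP[/eqP c_eq | /IH //].
move: IH; rewrite -c_eq => /Rnat_eq_upto eq_before.
have [|l l_lt c_bd] := ncols_block c K; first by rewrite ncols_last.
pose w r := (Mmat (Rnat R) r c - Mmat (Rnat R') r c)%R 0%R.
apply/rowP => p; have w_eq0 : forall r, w r p = 0%R.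
  apply: (shifted_coef_eq0_of_roots _ _ _ T a_inj (al n t l.+1) t n) => //.
  - by rewrite card_T.
  - by rewrite al_addt ?leq_subr.
  - by move=> r r_out; rewrite /w (Mmat_subr l) // (negbTE r_out) mxE.
  move=> l' l'_T; under eq_bigr => r _ do rewrite /w !mxE mulrBl.
  by rewrite sumrB -!query_entry eq_q ?subrr.
have := w_eq0 (al n t l.+1 + s); rewrite /w (Mmat_subr l) // leq_addr ltn_add2l ltn_ord /=.
by rewrite addKn !RnatE !mxE => /eqP; rewrite subr_eq0 => /eqP.
Qed.

Lemma card_query_fiber (Qv : 'I_n -> 'I_(alpha n k t) -> 'rV[F]_(alpha' n k t * m)) :
  #|[set R : rand_t F n k t m |
      [forall l in T, forall c : 'I_(alpha n k t), query (Rnat R) a l c == Qv l c]]| = 1.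
Proof.
pose e (s : 'I_t) : 'I_n := enum_val (cast_ord (esym card_T) s).
have e_T s : e s \in T by apply: enum_valP.
pose e_inv l (l_T : l \in T) := cast_ord card_T (enum_rank_in l_T l).
have e_invK l (l_T : l \in T) : e (e_inv l l_T) = l by rewrite /e cast_ordK enum_rankK_in.
pose G R : rand_t F n k t m :=
  [ffun sc : 'I_t * 'I_(alpha n k t) => query (Rnat R) a (e sc.1) sc.2].
have G_inj : injective G.
  move=> R R' eq_G; apply: query_inj => l c l_T.
  have := congr1 (fun f : rand_t F n k t m => f (e_inv l l_T, c)) eq_G.
  by rewrite !ffunE /= e_invK.
pose y : rand_t F n k t m := [ffun sc => Qv (e sc.1) sc.2].
apply: etrans (_ : _ = #|G @^-1: [set y]|) _; last by rewrite card_preimset // cards1.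
apply: eq_card => R; rewrite !inE; apply/forallP/eqP => [Q_eq | GR_eq l].
  apply/ffunP => -[s c]; rewrite !ffunE /=.
  by have /implyP/(_ (e_T s))/forallP/(_ c)/eqP := Q_eq (e s).
apply/implyP => l_T; apply/forallP => c.
have := congr1 (fun f : rand_t F n k t m => f (e_inv l l_T, c)) GR_eq.
by rewrite !ffunE /= e_invK => ->.
Qed.

End Privacy.

End Matrix.

End Staircase.

Theorem theorem1 (F : finFieldType) (n k t m : nat) (a : 'I_n -> F) :
  (1 <= t)%N -> (t < k)%N -> (k <= n)%N -> (1 <= m)%N ->
  (n < #|F|)%N -> injective a -> (forall l, a l != 0%R) ->
  (forall (T : {set 'I_n}), #|T| = t ->
   forall (i i' : 'I_m) (Qv : 'I_n -> 'I_(alpha n k t) -> 'rV[F]_(alpha' n k t * m)),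
     #|[set R : rand_t F n k t m |
          [forall l in T, forall c : 'I_(alpha n k t),
             query F n k t m (val i) (Rnat R) a l c == Qv l c]]|
     = #|[set R : rand_t F n k t m |
          [forall l in T, forall c : 'I_(alpha n k t),
             query F n k t m (val i') (Rnat R) a l c == Qv l c]]|)
  /\
  (forall mu : nat, (k <= mu <= n)%N ->
   forall L : {set 'I_n}, #|L| = mu ->
     ((mu - t) %| alpha' n k t)%N
     /\ (forall (i : 'I_m) (R : rand_t F n k t m),
          exists dec : ('I_n -> nat -> F) -> nat -> F,
          forall x : 'rV[F]_(alpha' n k t * m), forall j : nat, (j < alpha' n k t)%N ->
            dec (fun l c => if (l \in L) && (c < alpha' n k t %/ (mu - t))%N
                            then answer F n k t m (val i) (Rnat R) a x l c else 0%R) j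
            = dot (evec F n k t m (val i) j) x)
     /\ ((alpha' n k t)%:R / (mu * (alpha' n k t %/ (mu - t)))%N%:R
         = 1 - t%:R / mu%:R :> rat)%R).
Proof.
move=> _ t_lt_k k_le_n _ _ a_inj a_neq0; split.
  by move=> T card_T i i' Qv; rewrite !card_query_fiber.
move=> mu /andP[k_le_mu mu_le_n] L card_L.
have ncols_mu' : ncols n k t (n - mu).+1 * (mu - t) = alpha' n k t by apply: ncols_mu.
have [ncols_gt0 t_lt_mu] : 0 < ncols n k t (n - mu).+1 /\ t < mu.
  have : 0 < alpha' n k t by apply: alpha'_gt0.
  by rewrite -ncols_mu' muln_gt0 subn_gt0 => /andP.
have B_eq : alpha' n k t %/ (mu - t) = ncols n k t (n - mu).+1.
  by rewrite -ncols_mu' mulnK // subn_gt0.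
split; first by rewrite -ncols_mu' dvdn_mull.
split; first by move=> i R; apply: staircase_decoder.
by rewrite B_eq -ncols_mu' rate_eq.
Qed.
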